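(* Let $k\in K\setminus\{\mathbf{0},\mathbf{1}\}$ and let $\varphi=\psi\,\widetilde{U}\,\xi$, or $\varphi=\square\psi$, or $\varphi=\psi U\xi$, with $\psi,\xi\in k\text{-}stLTL(K,AP)$. Then for every $w\in(\mathcal{P}(AP))^{\omega}$: $(\|\varphi\|,w)\geq k$ iff $w\models\varphi_{b}$.
   Context: $(K,+,\cdot,Val^{\omega},\mathbf{0},\mathbf{1})$ is an idempotent ordered totally generalized product $\omega$-valuation monoid: $(K,+,\mathbf{0})$ is a complete idempotent monoid whose natural order ($k\leq k'$ iff $k'=k'+k$) is total; $Val^{\omega}$ maps infinite sequences over finite subsets of $K$ to $K$, with $Val^{\omega}((k_i)_i)=\mathbf{0}$ whenever some $k_i=\mathbf{0}$ and $Val^{\omega}(\mathbf{1}^{\omega})=\mathbf{1}$; $\cdot$ has $\mathbf{0}$ absorbing and $\mathbf{1}$ neutral; $\sum_I(k\cdot\mathbf{1})=k\cdot\sum_I\mathbf{1}$; $Val^{\omega}$ distributes over finite sums $\sum_{i_j\in I_j}k_{i_j}$ (over finite $L\subseteq K$) whenever for each $j$ all $k_{i_j}$ lie in $L\setminus\{\mathbf{0},\mathbf{1}\}$ or all lie in $\{\mathbf{0},\mathbf{1}\}$. Moreover $Val^{\omega}(\mathbf{1},k_1,k_2,\ldots)=Val^{\omega}(k_1,k_2,\ldots)$, $k=Val^{\omega}(k,\mathbf{1},\mathbf{1},\ldots)$, $k\leq\mathbf{1}$ for all $k$, and $Val^{\omega}(k_0,k_1,\ldots)\geq k$ whenever $k_i\geq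 k$ for all $i$. $AP$ is a finite set of atomic propositions. Weighted LTL formulas over $AP$ and $K$ have semantics $\|\cdot\|$ in $K^{(\mathcal{P}(AP))^{\omega}}$: $(\|k'\|,w)=k'$; $(\|a\|,w)=\mathbf{1}$ if $a\in w(0)$ else $\mathbf{0}$ (dually for $\lnot a$); $\vee$ is $+$, $\wedge$ is $\cdot$; $(\|\bigcirc\varphi\|,w)=(\|\varphi\|,w_{\geq1})$; $(\|\varphi U\psi\|,w)=\sum_{i\geq0}Val^{\omega}((\|\varphi\|,w_{\geq0}),\ldots,(\|\varphi\|,w_{\geq i-1}),(\|\psi\|,w_{\geq i}),\mathbf{1},\mathbf{1},\ldots)$; $(\|\square\varphi\|,w)=Val^{\omega}((\|\varphi\|,w_{\geq i}))_{i\geq0}$; $\varphi\widetilde{U}\psi:=\square\varphi\vee(\varphi U\psi)$. $sbLTL(K,AP)$ is given by $\varphi::=true\mid a\mid\lnot a\mid\varphi\vee\varphi\mid\varphi\wedge\varphi\mid\bigcirc\varphi\mid\varphi\widetilde{U}\varphi\mid\square\varphi$ ($true=\mathbf{1}$); its semantics are $\{\mathbf{0},\mathbf{1}\}$-valued and coincide with classical LTL satisfaction. $k\text{-}stLTL(K,AP)$ consists of formulas $\bigvee_{1\leq i\leq n}(k_i\wedge\varphi_i)$ with $k_i\geq k$, $k_i\notin\{\mathbf{0},\mathbf{1}\}$, $\varphi_i\in sbLTL(K,AP)$. For such $\varphi$, $\varphi_b:=\bigvee_i\varphi_i$; for $\varphi=\psi\widetilde{U}\xi$, $\square\psi$, $\psi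 U\xi$ with $\psi,\xi\in k\text{-}stLTL(K,AP)$, $\varphi_b$ is respectively $\psi_b\widetilde{U}\xi_b$, $\square\psi_b$, $\psi_bU\xi_b$, read as classical LTL formulas, and $w\models\varphi_b$ means classical satisfaction at position 0. *)

From Stdlib Require Import List.
From mathcomp Require Import all_boot.
Set Implicit Arguments. Unset Strict Implicit. Unset Printing Implicit Defensive.

Definition fin_range (K : Type) (f : nat -> K) : Prop :=
  exists L : list K, forall i, List.In (f i) L.

(* Idempotent ordered totally generalized product omega-valuation monoid. *)
Record valmonoid := ValMonoid {
  carrier :> Type;
  kplus : carrier -> carrier -> carrier;
  kzero : carrier;
  kone : carrier;
  kmul : carrier -> carrier -> carrier;
  ksum : forall I : Type, (I -> carrier) -> carrier;
  Val : (nat -> carrier) -> carrier;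
  kplusA : forall a b c, kplus a (kplus b c) = kplus (kplus a b) c;
  kplusC : forall a b, kplus a b = kplus b a;
  kplus0 : forall a, kplus kzero a = a;
  ksum_empty : forall f : Empty_set -> carrier, ksum f = kzero;
  ksum_unit : forall f : unit -> carrier, ksum f = f tt;
  ksum_bool : forall f : bool -> carrier, ksum f = kplus (f true) (f false);
  ksum_bij : forall (I J : Type) (g : I -> J) (h : J -> I) (f : J -> carrier),
      (forall i, h (g i) = i) -> (forall j, g (h j) = j) ->
      ksum (fun i => f (g i)) = ksum f;
  ksum_partition : forall (J : Type) (I : J -> Type) (f : {j : J & I j} -> carrier),
      ksum f = ksum (fun j => ksum (fun i : I j => f (existT I j i)));
  kplus_idem : forall a, kplus a a = a;
  (* the natural order is total *)
  kle_total : forall a b, b = kplus b a \/ a = kplus a b;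
  Val_zero : forall f, fin_range f -> (exists i, f i = kzero) -> Val f = kzero;
  Val_one : Val (fun _ => kone) = kone;
  kmul0l : forall a, kmul kzero a = kzero;
  kmul0r : forall a, kmul a kzero = kzero;
  kmul1l : forall a, kmul kone a = a;
  kmul1r : forall a, kmul a kone = a;
  ksum_mul1 : forall (I : Type) (a : carrier),
      ksum (fun _ : I => kmul a kone) = kmul a (ksum (fun _ : I => kone));
  Val_distr : forall (n : nat -> nat) (kk : forall j, 'I_(n j) -> carrier)
      (L : list carrier),
      (forall j i, List.In (kk j i) L) ->
      (forall j, (forall i, kk j i <> kzero /\ kk j i <> kone) \/
                 (forall i, kk j i = kzero \/ kk j i = kone)) ->
      Val (fun j => ksum (kk j)) =
      ksum (fun c : (forall j, 'I_(n j)) => Val (fun j => kk j (c j)));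
  Val_cons1 : forall f, fin_range f ->
      Val (fun i => if i is i'.+1 then f i' else kone) = Val f;
  Val_head : forall a, a = Val (fun i => if i is 0 then a else kone);
  kle_one : forall a, kone = kplus kone a;
  Val_ge : forall (f : nat -> carrier) a, fin_range f ->
      (forall i, f i = kplus (f i) a) -> Val f = kplus (Val f) a
}.

Definition kle (K : valmonoid) (a b : K) : Prop := b = kplus b a.

Section Syntax.
Variables (K : valmonoid) (AP : finType).

Definition word := nat -> {set AP}.
Definition shift (i : nat) (w : word) : word := fun n => w (i + n).

Inductive wLTL :=
| WConst of K
| WAtom of AP
| WNAtom of AP
| WOr of wLTL & wLTL
| WAnd of wLTL & wLTL
| WNext of wLTL
| WUntil of wLTL & wLTL
| WBox of wLTL.

Definition WWUntil (p q : wLTL) : wLTL := WOr (WBox p) (WUntil p q).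
Definition WTrue : wLTL := WConst (kone K).

Fixpoint sem (p : wLTL) (w : word) : K :=
  match p with
  | WConst c => c
  | WAtom a => if a \in w 0 then kone K else kzero K
  | WNAtom a => if a \in w 0 then kzero K else kone K
  | WOr p q => kplus (sem p w) (sem q w)
  | WAnd p q => kmul (sem p w) (sem q w)
  | WNext p => sem p (shift 1 w)
  | WUntil p q => ksum (fun i : nat =>
        Val (fun j => if j < i then sem p (shift j w)
                      else if j == i then sem q (shift i w) else kone K))
  | WBox p => Val (fun i => sem p (shift i w))
  end.

Inductive LTL :=
| LTrue
| LAtom of AP
| LNAtom of AP
| LOr of LTL & LTL
| LAnd of LTL & LTL
| LNext of LTL
| LUntil of LTL & LTL
| LBox of LTL.

Fixpoint lsat (p : LTL) (w : word) : Prop :=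
  match p with
  | LTrue => True
  | LAtom a => a \in w 0
  | LNAtom a => a \notin w 0
  | LOr p q => lsat p w \/ lsat q w
  | LAnd p q => lsat p w /\ lsat q w
  | LNext p => lsat p (shift 1 w)
  | LUntil p q => exists i, lsat q (shift i w) /\ forall j, j < i -> lsat p (shift j w)
  | LBox p => forall i, lsat p (shift i w)
  end.

(* sbLTL(K,AP) as a syntactic fragment of weighted LTL *)
Inductive is_sb : wLTL -> Prop :=
| sb_true : is_sb WTrue
| sb_atom a : is_sb (WAtom a)
| sb_natom a : is_sb (WNAtom a)
| sb_or p q : is_sb p -> is_sb q -> is_sb (WOr p q)
| sb_and p q : is_sb p -> is_sb q -> is_sb (WAnd p q)
| sb_next p : is_sb p -> is_sb (WNext p)
| sb_wuntil p q : is_sb p -> is_sb q -> is_sb (WWUntil p q)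
| sb_box p : is_sb p -> is_sb (WBox p).

(* reading an sbLTL formula as a classical LTL formula (true = 1 |-> LTrue) *)
Fixpoint to_ltl (p : wLTL) : LTL :=
  match p with
  | WConst _ => LTrue
  | WAtom a => LAtom a
  | WNAtom a => LNAtom a
  | WOr p q => LOr (to_ltl p) (to_ltl q)
  | WAnd p q => LAnd (to_ltl p) (to_ltl q)
  | WNext p => LNext (to_ltl p)
  | WUntil p q => LUntil (to_ltl p) (to_ltl q)
  | WBox p => LBox (to_ltl p)
  end.

(* k-stLTL formulas  \/_{1<=i<=n} (k_i /\ phi_i), n >= 1, given as the
   nonempty list (k_1,phi_1) :: ps *)
Definition stdata := ((K * wLTL) * list (K * wLTL))%type.

Definition st_list (s : stdata) : list (K * wLTL) := s.1 :: s.2.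

Definition is_kst (k : K) (s : stdata) : Prop :=
  List.Forall (fun p : K * wLTL =>
     kle k p.1 /\ p.1 <> kzero K /\ p.1 <> kone K /\ is_sb p.2) (st_list s).

Definition st_w (s : stdata) : wLTL :=
  foldl (fun acc p => WOr acc (WAnd (WConst p.1) p.2))
        (WAnd (WConst s.1.1) s.1.2) s.2.

(* phi_b := \/_i phi_i *)
Definition st_b (s : stdata) : LTL :=
  foldl (fun acc p => LOr acc (to_ltl p.2)) (to_ltl s.1.2) s.2.

End Syntax.

(* Every sbLTL formula evaluates to exactly 1 on the words satisfying it and
   to 0 on the others, so a k-stLTL formula takes one of its weights k_i >= k
   where its Boolean reading holds and 0 elsewhere; since the order is total
   and + is idempotent, a sum is always one of its summands, so the values
   stay in a finite set.  The property "value >= k where the classical formula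
   holds, value 0 elsewhere" is preserved by [Val] (box) and by the sum over
   the witnesses of an until: one good witness lifts the sum above k, and
   without one every summand has a zero factor.  As k <> 0, "value >= k" then
   characterises satisfaction. *)
From Stdlib Require Import List Classical ClassicalEpsilon FunctionalExtensionality
  ProofIrrelevance.
From mathcomp Require Import all_boot.
Set Implicit Arguments. Unset Strict Implicit. Unset Printing Implicit Defensive.

Section Valmonoid.
Variable K : valmonoid.

Lemma kle_refl (a : K) : kle a a.
Proof. by rewrite /kle kplus_idem. Qed.

Lemma kle_plusr (k a r : K) : kle k a -> kle k (kplus a r).
Proof. by rewrite /kle => ka; rewrite -kplusA (kplusC r k) kplusA -ka. Qed.

Lemma kle_plusl (k a r : K) : kle k a -> kle k (kplus r a).
Proof. by rewrite kplusC; apply: kle_plusr. Qed.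

Lemma kle1_eq (a : K) : kle (kone K) a -> a = kone K.
Proof. by rewrite /kle => ->; rewrite kplusC -kle_one. Qed.

Lemma kle0_eq (k : K) : kle k (kzero K) -> k = kzero K.
Proof. by rewrite /kle kplus0. Qed.

Lemma kplus_sel (a b : K) : kplus a b = a \/ kplus a b = b.
Proof.
by case: (kle_total a b) => [ba|ab]; [right; rewrite kplusC -ba | left; rewrite -ab].
Qed.

Lemma ksum_const0 (I : Type) : ksum (fun _ : I => kzero K) = kzero K.
Proof. by have := ksum_mul1 I (kzero K); rewrite !kmul0l. Qed.

Section KsumD1.
Variables (I : Type) (i0 : I).

Let Piece (b : bool) : Type := if b return Type then (unit : Type) else {i : I | i <> i0}.

Let glue (s : {b : bool & Piece b}) : I :=
  match s with
  | existT true _ => i0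
  | existT false i => proj1_sig i
  end.

Let split (i : I) : {b : bool & Piece b} :=
  match excluded_middle_informative (i = i0) with
  | left _ => existT Piece true tt
  | right ne => existT Piece false (exist _ i ne)
  end.

Let glueK (i : I) : glue (split i) = i.
Proof. by rewrite /split; case: excluded_middle_informative => [->|]. Qed.

Let splitK (s : {b : bool & Piece b}) : split (glue s) = s.
Proof.
rewrite /split; case: s => -[] /=.
  by case; case: excluded_middle_informative.
case=> i ne /=; case: excluded_middle_informative => // ne'.
by rewrite (proof_irrelevance _ ne ne').
Qed.

Lemma ksumD1 (f : I -> K) :
  ksum f = kplus (f i0) (ksum (fun i : {i : I | i <> i0} => f (proj1_sig i))).
Proof.
rewrite -(ksum_bij f splitK glueK) (ksum_partition (fun s => f (glue s))) ksum_bool.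
by rewrite (ksum_unit (fun t => f (glue (existT Piece true t)))).
Qed.

End KsumD1.

(* As 1 is the top element, for k = 1 this says that [a] is the 0/1 truth
   value of [P]. *)
Definition detects (k : K) (P : Prop) (a : K) : Prop :=
  (P -> kle k a) /\ (~ P -> a = kzero K).

Lemma detects_iff (k : K) (P : Prop) (a : K) :
  k <> kzero K -> detects k P a -> kle k a <-> P.
Proof.
move=> k0 [Pa nPa]; split=> [ka|]; last exact: Pa.
by apply: NNPP => nP; apply: k0; apply: kle0_eq; rewrite -(nPa nP).
Qed.

Lemma detects1_01 (P : Prop) (a : K) :
  detects (kone K) P a -> List.In a [:: kzero K; kone K].
Proof.
move=> [Pa nPa]; case: (classic P) => [/Pa/kle1_eq|/nPa] ->; by [right; left | left].
Qed.

Lemma detects_if (b : bool) : detects (kone K) b (if b then kone K else kzero K).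
Proof. by case: b; split=> // _; apply: kle_refl. Qed.

Lemma detects_plus (k : K) (P Q : Prop) (a b : K) :
  detects k P a -> detects k Q b -> detects k (P \/ Q) (kplus a b).
Proof.
move=> [Pa nPa] [Qb nQb]; split=> [[/Pa|/Qb]|nPQ]; first exact: kle_plusr.
- exact: kle_plusl.
- by rewrite nPa ?nQb ?kplus0 => // ?; apply: nPQ; [right | left].
Qed.

Lemma detects_mul1 (P Q : Prop) (a b : K) :
  detects (kone K) P a -> detects (kone K) Q b ->
  detects (kone K) (P /\ Q) (kmul a b).
Proof.
move=> [Pa nPa] [Qb nQb]; split=> [[/Pa/kle1_eq -> /Qb/kle1_eq ->]|nPQ].
  by rewrite kmul1l; apply: kle_refl.
case: (classic P) => [p|/nPa ->]; last exact: kmul0l.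
by rewrite nQb ?kmul0r // => q; apply: nPQ.
Qed.

Lemma detects_scale (k c : K) (P : Prop) (a : K) :
  kle k c -> detects (kone K) P a -> detects k P (kmul c a).
Proof.
move=> kc [Pa nPa]; split=> [/Pa/kle1_eq ->|/nPa ->]; first by rewrite kmul1r.
exact: kmul0r.
Qed.

Lemma detects_Val (k : K) (f : nat -> K) (P : nat -> Prop) :
  fin_range f -> (forall i, detects k (P i) (f i)) ->
  detects k (forall i, P i) (Val f).
Proof.
move=> ff fP; split=> [allP|/not_all_ex_not [i nPi]].
  by apply: Val_ge => // i; apply: (proj1 (fP i)).
by apply: Val_zero => //; exists i; apply: (proj2 (fP i)).
Qed.

Definition until_term (f h : nat -> K) (i j : nat) : K :=
  if j < i then f j else if j == i then h i else kone K.

Definition until_sum (f h : nat -> K) : K := ksum (fun i => Val (until_term f h i)).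

Lemma fin_range_until_term (f h : nat -> K) (i : nat) :
  fin_range f -> fin_range h -> fin_range (until_term f h i).
Proof.
move=> [Lf fLf] [Lh hLh]; exists (kone K :: Lf ++ Lh) => j; rewrite /until_term.
case: ifP => _; first by right; apply: in_or_app; left.
by case: ifP => _; [right; apply: in_or_app; right | left].
Qed.

Lemma detects_until (k : K) (f h : nat -> K) (P Q : nat -> Prop) :
  fin_range f -> fin_range h ->
  (forall j, detects k (P j) (f j)) -> (forall i, detects k (Q i) (h i)) ->
  detects k (exists i, Q i /\ forall j, j < i -> P j) (until_sum f h).
Proof.
move=> ff fh fP hQ; split=> [[i [Qi Pj]]|noU].
  rewrite /until_sum (ksumD1 i); apply: kle_plusr.
  apply: Val_ge => [|j]; first exact: fin_range_until_term.
  rewrite /until_term; case: ifP => [/Pj/(proj1 (fP j)) //|_].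
  by case: ifP => _; [apply: (proj1 (hQ i)) | apply: kle_one].
rewrite /until_sum -[RHS](ksum_const0 nat); congr ksum.
apply: functional_extensionality => i.
apply: Val_zero; first exact: fin_range_until_term.
case: (classic (Q i)) => [Qi|nQi]; last first.
  by exists i; rewrite /until_term ltnn eqxx; apply: (proj2 (hQ i)).
have [j nPj] : exists j, ~ (j < i -> P j).
  by apply: not_all_ex_not => Pj; apply: noU; exists i.
have [ji {}nPj] := imply_to_and _ _ nPj.
by exists j; rewrite /until_term ji; apply: (proj2 (fP j)).
Qed.

Variable AP : finType.

Definition fin_valued (phi : wLTL K AP) : Prop :=
  exists L, forall w, List.In (sem phi w) L.

Definition sem_detects (k : K) (phi : wLTL K AP) (b : LTL AP) : Prop :=
  forall w, detects k (lsat b w) (sem phi w).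

Lemma fin_valued_shift (phi : wLTL K AP) (w : word AP) :
  fin_valued phi -> fin_range (fun i => sem phi (shift i w)).
Proof. by move=> [L phiL]; exists L. Qed.

Lemma sem_detects1_fin_valued p (b : LTL AP) :
  sem_detects (kone K) p b -> fin_valued p.
Proof. by move=> pb; exists [:: kzero K; kone K] => w; apply: detects1_01 (pb w). Qed.

Lemma fin_valued_or p q : fin_valued p -> fin_valued q -> fin_valued (WOr p q).
Proof.
move=> [Lp pL] [Lq qL]; exists (Lp ++ Lq) => w /=; apply: in_or_app.
by case: (kplus_sel (sem p w) (sem q w)) => ->; [left | right].
Qed.

Lemma fin_valued_scale (c : K) q (b : LTL AP) :
  sem_detects (kone K) q b -> fin_valued (WAnd (WConst AP c) q).
Proof.
move=> qb; exists [:: kzero K; c] => w /=.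
case: (detects1_01 (qb w)) => [<-|[<-|//]]; rewrite ?kmul0r ?kmul1r.
- by left.
- by right; left.
Qed.

Lemma sem_detects_or (k : K) p q (b c : LTL AP) :
  sem_detects k p b -> sem_detects k q c -> sem_detects k (WOr p q) (LOr b c).
Proof. by move=> pb qc w; apply: detects_plus. Qed.

Lemma sem_detects_and1 p q (b c : LTL AP) :
  sem_detects (kone K) p b -> sem_detects (kone K) q c ->
  sem_detects (kone K) (WAnd p q) (LAnd b c).
Proof. by move=> pb qc w; apply: detects_mul1. Qed.

Lemma sem_detects_scale (k c : K) q (b : LTL AP) :
  kle k c -> sem_detects (kone K) q b -> sem_detects k (WAnd (WConst AP c) q) b.
Proof. by move=> kc qb w; apply: detects_scale. Qed.

Lemma sem_detects_next (k : K) p (b : LTL AP) :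
  sem_detects k p b -> sem_detects k (WNext p) (LNext b).
Proof. by move=> pb w; apply: pb. Qed.

Lemma sem_detects_box (k : K) p (b : LTL AP) :
  fin_valued p -> sem_detects k p b -> sem_detects k (WBox p) (LBox b).
Proof. by move=> pfin pb w; apply: detects_Val (fin_valued_shift w pfin) _. Qed.

Lemma sem_detects_until (k : K) p q (b c : LTL AP) :
  fin_valued p -> fin_valued q -> sem_detects k p b -> sem_detects k q c ->
  sem_detects k (WUntil p q) (LUntil b c).
Proof.
move=> pfin qfin pb qc w.
exact: detects_until (fin_valued_shift w pfin) (fin_valued_shift w qfin) _ _.
Qed.

Lemma sem_detects_wuntil (k : K) p q (b c : LTL AP) :
  fin_valued p -> fin_valued q -> sem_detects k p b -> sem_detects k q c ->
  sem_detects k (WWUntil p q) (LOr (LBox b) (LUntil b c)).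
Proof.
move=> pfin qfin pb qc.
by apply: sem_detects_or; [apply: sem_detects_box | apply: sem_detects_until].
Qed.

Lemma sb_sem_detects p : is_sb p -> sem_detects (kone K) p (to_ltl p).
Proof.
elim=> {p} [|a|a|p q _ ? _ ?|p q _ ? _ ?|p _ ?|p q _ pp _ qq|p _ pp].
- by move=> w; split=> /= [_|/(_ I)//]; apply: kle_refl.
- by move=> w; apply: detects_if.
- by move=> w /=; rewrite -if_neg; apply: detects_if.
- exact: sem_detects_or.
- exact: sem_detects_and1.
- exact: sem_detects_next.
- exact: sem_detects_wuntil (sem_detects1_fin_valued pp)
    (sem_detects1_fin_valued qq) pp qq.
- exact: sem_detects_box (sem_detects1_fin_valued pp) pp.
Qed.

Lemma st_fold_detects (k : K) (ps : list (K * wLTL K AP)) acc accb :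
  List.Forall (fun p : K * wLTL K AP => kle k p.1 /\ is_sb p.2) ps ->
  fin_valued acc -> sem_detects k acc accb ->
  let phi := foldl (fun acc p => WOr acc (WAnd (WConst AP p.1) p.2)) acc ps in
  fin_valued phi /\
  sem_detects k phi (foldl (fun acc p => LOr acc (to_ltl p.2)) accb ps).
Proof.
elim: ps acc accb => [|[c q] ps IH] acc accb //=.
move=> /Forall_cons_iff [[kc /sb_sem_detects qq] ps_ok] accfin accb_ok; apply: IH => //.
  exact: fin_valued_or accfin (fin_valued_scale c qq).
exact: sem_detects_or accb_ok (sem_detects_scale kc qq).
Qed.

Lemma st_sem_detects (k : K) (s : stdata K AP) :
  is_kst k s -> fin_valued (st_w s) /\ sem_detects k (st_w s) (st_b s).
Proof.
case: s => [[c q] ps]; rewrite /is_kst /st_list.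
move=> /Forall_cons_iff [[kc [_ [_ q_sb]]] ps_ok].
have qq := sb_sem_detects q_sb.
apply: st_fold_detects; last exact: sem_detects_scale kc qq.
- by apply: Forall_impl ps_ok => p [? [_ [_ ?]]].
- exact: fin_valued_scale qq.
Qed.

End Valmonoid.

Theorem lemma7 (K : valmonoid) (AP : finType) (k : K)
  (hk0 : k <> kzero K) (hk1 : k <> kone K)
  (psi xi : stdata K AP) (hpsi : is_kst k psi) (hxi : is_kst k xi) :
  forall w : word AP,
    (kle k (sem (WWUntil (st_w psi) (st_w xi)) w) <->
       lsat (LOr (LBox (st_b psi)) (LUntil (st_b psi) (st_b xi))) w) /\
    (kle k (sem (WBox (st_w psi)) w) <-> lsat (LBox (st_b psi)) w) /\
    (kle k (sem (WUntil (st_w psi) (st_w xi)) w) <->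
       lsat (LUntil (st_b psi) (st_b xi)) w).
Proof.
move=> w; have [psi_fin psi_ok] := st_sem_detects hpsi.
have [xi_fin xi_ok] := st_sem_detects hxi.
split; [|split]; apply: detects_iff hk0 _.
- exact: sem_detects_wuntil psi_fin xi_fin psi_ok xi_ok w.
- exact: sem_detects_box psi_fin psi_ok w.
- exact: sem_detects_until psi_fin xi_fin psi_ok xi_ok w.
Qed.
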